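(* There is an absolute constant $c>0$ such that the following holds. Let $\mathcal G$ be any linear congestion game with $n\ge 3$ players, let $\beta\ge1$ and $T\ge n$, and consider any best response dynamics starting from an arbitrary initial state and satisfying the $(T,\beta)$-Fairness Condition. Then the state $S$ reached after the first $\lceil\log\log n\rceil$ of its $\beta$-bounded $T$-coverings (hence after at most $T\lceil\log\log n\rceil$ best responses) satisfies $C(S)\le c\,\beta\,\mathrm{OPT}$, i.e. $C(S)/\mathrm{OPT}=O(\beta)$.
   Context: A linear congestion game has players $N=\{1,\dots,n\}$, a finite resource set $E$, strategy sets $\Sigma_i\subseteq 2^E$, and delay functions $f_e(x)=a_ex+b_e$ with $a_e,b_e\ge 0$. For a profile $S=(s_1,\dots,s_n)$, $n_e(S)=|\{i:e\in s_i\}|$, the cost of player $i$ is $c_i(S)=\sum_{e\in s_i}f_e(n_e(S))$, the social cost is $C(S)=\sum_i c_i(S)$, and $\mathrm{OPT}=\min_S C(S)$ (assumed positive). A best response of player $i$ in $S$ is a strategy $s_i^b\in\Sigma_i$ minimizing $c_i(S_{-i},\cdot)$ (where $(S_{-i},s_i')$ replaces $s_i$ by $s_i'$); if no strategy strictly decreases $i$'s cost, the best response is $s_i$ itself. A best response dynamics is a sequence of states each obtained from the previous one by a best response of some player. A $T$-covering is a segment of $T$ consecutive best responses of the dynamics in which every player moves at least once; it is $\beta$-bounded if moreover every player moves at most $\beta$ times in it. A dynamics satisfies the $(T,\beta)$-Fairness Condition if it can be decomposed into a sequence of consecutive $\beta$-bounded $T$-coverings. Logarithms are base 2. *)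

From HB Require Import structures.
From mathcomp Require Import all_boot all_order all_algebra.
Set Implicit Arguments. Unset Strict Implicit. Unset Printing Implicit Defensive.
Import Order.TTheory GRing.Theory Num.Theory.
Local Open Scope ring_scope.

Definition profile (n : nat) (E : finType) := {ffun 'I_n -> {set E}}.

Definition load n (E : finType) (S : profile n E) (e : E) : nat :=
  #|[set i : 'I_n | e \in S i]|.

Definition pcost (R : realFieldType) n (E : finType) (a b : E -> R)
  (S : profile n E) (i : 'I_n) : R :=
  \sum_(e in S i) (a e * (load S e)%:R + b e).

Definition scost (R : realFieldType) n (E : finType) (a b : E -> R)
  (S : profile n E) : R :=
  \sum_(i < n) pcost a b S i.

Definition feasible n (E : finType) (Sigma : 'I_n -> {set {set E}})
  (S : profile n E) : Prop :=
  forall i, S i \in Sigma i.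

Definition upd n (E : finType) (S : profile n E) (i : 'I_n) (s : {set E})
  : profile n E := [ffun j => if j == i then s else S j].

Definition best_response (R : realFieldType) n (E : finType) (a b : E -> R)
  (Sigma : 'I_n -> {set {set E}}) (S : profile n E) (i : 'I_n)
  (s : {set E}) : Prop :=
  [/\ s \in Sigma i,
      (forall s', s' \in Sigma i ->
          pcost a b (upd S i s) i <= pcost a b (upd S i s') i) &
      ((forall s', s' \in Sigma i ->
          pcost a b S i <= pcost a b (upd S i s') i) -> s = S i)].

(* Number of moves of player i in the j-th length-T segment
   (steps j*T, ..., j*T + T - 1); p t is the player moving at step t. *)
Definition moves n (p : nat -> 'I_n) (T j : nat) (i : 'I_n) : nat :=
  (\sum_(j * T <= t < j * T + T) (p t == i))%N.

Definition bounded_covering (R : realFieldType) n (p : nat -> 'I_n)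
  (beta : R) (T j : nat) : Prop :=
  forall i : 'I_n, (0 < moves p T j i)%N /\ (moves p T j i)%:R <= beta.

(* ceil(log2(log2 n)) for n >= 2: the least k with log2 n <= 2^k,
   i.e. with ceil(log2 n) <= 2^k. *)
Definition loglog (n : nat) : nat := up_log 2 (up_log 2 n).

(* Fix a feasible profile O of cost Z and a segment of T best responses in
   which every player moves at least once.  If N_e bounds the load of e
   during the segment, deviating to O_i costs a player at most
   Q_i = sum_(e in O_i) (a_e (N_e + 1) + b_e), so every best response costs
   at most Q_i.  Three estimates follow, with Q = sum_i Q_i:
   - final cost: C(end) <= 2 Q, charging each player its cost right after
     its last move and counting the pairs of users of every resource;
   - movers: if nobody moves more than beta times, the movers pay <= beta Q;
   - potential: the peak loads satisfy
     sum_e a_e N_e^2 <= C(start) + 2 (total cost paid by the movers).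
   With N = n the first covering gives C <= 2 (n + 1) Z; with the peak loads
   and AM-GM for a parameter nu >= 2 beta each later covering gives
   nu C(end) <= 2 C(start) + 2 nu^2 Z + 4 nu Z.  Starting from 8 x^2 beta Z
   with x = 2^j and choosing nu = 2 beta x, the bound becomes 16 beta x Z,
   i.e. the exponent j roughly halves; from j = ceil(log n), ceil(log log n)
   coverings bring it down to 4. *)

From HB Require Import structures.
From mathcomp Require Import all_boot all_order all_algebra.
From mathcomp Require Import zify lra.
Import Order.TTheory GRing.Theory Num.Theory.
Set Implicit Arguments. Unset Strict Implicit. Unset Printing Implicit Defensive.
Local Open Scope ring_scope.

Lemma sq_step (x y : nat) (c : bool) :
  (x <= y + c -> x ^ 2 <= y ^ 2 + 2 * (c * x))%N.
Proof.
rewrite -!mulnn; case: c => /= grow.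
  rewrite mul1n; case: x grow => // x; rewrite addn1 ltnS => grow.
  by have := leq_mul grow grow; lia.
by rewrite mul0n addn0 leq_mul // -(addn0 y).
Qed.

Section Loads.
Variables (n : nat) (E : finType).
Implicit Types (S f : profile n E) (i j : 'I_n) (s : {set E}) (e : E).

Lemma load_sum S e : load S e = (\sum_(i < n) (e \in S i))%N.
Proof.
rewrite /load -sum1_card big_mkcond /=; apply: eq_bigr => i _.
by rewrite inE; case: (e \in S i).
Qed.

Lemma load_le_n S e : (load S e <= n)%N.
Proof. by rewrite /load (leq_trans (max_card _)) ?card_ord. Qed.

Lemma upd_same S i s : upd S i s i = s.
Proof. by rewrite /upd ffunE eqxx. Qed.

Lemma upd_other S i j s : j != i -> upd S i s j = S j.
Proof. by move=> /negbTE ji; rewrite /upd ffunE ji. Qed.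

Lemma load_upd S i s e : (load (upd S i s) e <= load S e + (e \in s))%N.
Proof.
rewrite !load_sum (bigD1 i) //= [X in (_ <= X + _)%N](bigD1 i) //= upd_same.
under eq_bigr => j ji do rewrite upd_other //.
lia.
Qed.

Lemma load_sq_staggered f (G : 'I_n -> profile n E) (t : 'I_n -> nat) e :
  (forall i l, (t l <= t i)%N -> G i l = f l) ->
  (\sum_(i < n | e \in f i) load f e <= 2 * \sum_(i < n | e \in f i) load (G i) e)%N.
Proof.
move=> agree; rewrite (load_sum f e); set x := fun l => e \in f l.
set cnt := fun i => (\sum_(l < n) ((t l <= t i) && x l))%N.
have pairs : (\sum_(i < n | x i) \sum_(l < n) x l <= 2 * \sum_(i < n | x i) cnt i)%N.
  (* each pair (i, l) of users is counted from the later of the two *)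
  have sym : (\sum_(i < n | x i) cnt i =
              \sum_(i < n) \sum_(l < n) [&& x i, x l & t l <= t i])%N.
    rewrite big_mkcond /=; apply: eq_bigr => i _.
    case: (x i) => /=; last by rewrite big1.
    by apply: eq_bigr => l _; rewrite andbC.
  have swap : (\sum_(i < n) \sum_(l < n) [&& x i, x l & t l <= t i] =
               \sum_(i < n) \sum_(l < n) [&& x l, x i & t i <= t l])%N.
    exact: exchange_big.
  rewrite mul2n -addnn sym {2}swap big_mkcond -!big_split /=.
  apply: leq_sum => i _; case: (x i) => /=; last by rewrite big1.
  rewrite -big_split /=; apply: leq_sum => l _.
  by case: (x l); case: (leqP (t l) (t i)) => //= /ltnW ->.
apply: (leq_trans pairs); rewrite leq_mul2l /=; apply: leq_sum => i _.
rewrite load_sum; apply: leq_sum => l _; rewrite /x.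
by case tli: (t l <= t i)%N => //=; rewrite agree.
Qed.

Variable R : realFieldType.

Lemma sum_by_resource S (F : 'I_n -> E -> R) :
  \sum_(i < n) \sum_(e in S i) F i e = \sum_e \sum_(i < n | e \in S i) F i e.
Proof.
under eq_bigr => i _ do rewrite big_mkcond.
rewrite exchange_big /=; apply: eq_bigr => e _.
by rewrite [RHS]big_mkcond.
Qed.

Lemma sum_by_load S (F : E -> R) :
  \sum_(i < n) \sum_(e in S i) F e = \sum_e (load S e)%:R * F e.
Proof.
rewrite sum_by_resource; apply: eq_bigr => e _.
rewrite load_sum natr_sum mulr_suml [LHS]big_mkcond /=; apply: eq_bigr => i _.
by case: (e \in S i); rewrite ?mul1r ?mul0r.
Qed.

End Loads.

(* Number of moves of player i among the steps t0, ..., t0 + T - 1; the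
   segment [moves p T j] of the fairness condition is [nmoves p (j * T) T]. *)
Definition nmoves n (p : nat -> 'I_n) (t0 T : nat) (i : 'I_n) : nat :=
  (\sum_(t0 <= t < t0 + T) (p t == i))%N.

Lemma sum_over_movers (R : realFieldType) n (p : nat -> 'I_n) (beta : R) t0 T
  (g : 'I_n -> R) :
  (forall i, 0 <= g i) -> (forall i, (nmoves p t0 T i)%:R <= beta) ->
  \sum_(t0 <= t < t0 + T) g (p t) <= beta * \sum_(i < n) g i.
Proof.
move=> g_ge0 few_moves.
rewrite (eq_bigr (fun t => \sum_(i < n) ((p t == i)%:R * g i))); last first.
  move=> t _; rewrite (bigD1 (p t)) //= eqxx mul1r big1 ?addr0 // => i ti.
  by rewrite eq_sym (negbTE ti) mul0r.
rewrite exchange_big /= mulr_sumr; apply: ler_sum => i _.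
by rewrite -mulr_suml -natr_sum ler_wpM2r ?few_moves.
Qed.

(* The bound after a covering is 8 x^2 beta C(O) with x = 2^j; one more
   covering replaces j by next_exponent j, roughly halving it. *)
Definition next_exponent (j : nat) : nat := (j %/ 2).+1.

Lemma next_exponent_ge j : (2 * 2 ^ j <= (2 ^ next_exponent j) ^ 2)%N.
Proof. by rewrite -expnS -expnM leq_exp2l // /next_exponent; lia. Qed.

Lemma iter_next_exponent_le j k : (iter k next_exponent j <= j %/ 2 ^ k + 2)%N.
Proof.
elim: k => [|k IH] /=; first by rewrite divn1 leq_addr.
set i := iter k next_exponent j in IH *; rewrite /next_exponent expnS mulnC divnMA.
by move: IH; set m := (j %/ 2 ^ k)%N; lia.
Qed.

Lemma loglog_gt0 n : (2 < n)%N -> (0 < loglog n)%N.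
Proof.
move=> n_gt2; rewrite /loglog up_log_gt0 /=.
by have := up_logP n (ltnSn 1); case: (up_log 2 n) => [|[|u]] //=; lia.
Qed.

Lemma loglog_exponent_le n : (2 < n)%N ->
  (iter (loglog n).-1 next_exponent (up_log 2 n) <= 4)%N.
Proof.
move=> n_gt2; apply: leq_trans (iter_next_exponent_le _ _) _.
have L_gt0 := loglog_gt0 n_gt2.
have : (up_log 2 n <= 2 * 2 ^ (loglog n).-1)%N.
  by rewrite -expnS prednK // up_logP.
move/(leq_div2r (2 ^ (loglog n).-1)); rewrite mulnK ?expn_gt0 //; lia.
Qed.

Lemma halving_step (R : realFieldType) (beta Z x C C' : R) :
  1 <= beta -> 0 <= Z -> 1 <= x -> C <= 8 * x ^+ 2 * beta * Z ->
  (2 * beta * x) * C' <=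
    2 * C + 2 * (2 * beta * x) ^+ 2 * Z + 4 * (2 * beta * x) * Z ->
  C' <= 16 * beta * x * Z.
Proof.
move=> beta_ge1 Z_ge0 x_ge1 C_le rec.
have nu_gt0 : 0 < 2 * beta * x by nra.
rewrite -(ler_pM2l nu_gt0); apply: le_trans rec _.
have h1 : 0 <= (beta - 1) * (x * x * beta * Z).
  by apply: mulr_ge0; [lra | apply: mulr_ge0 => //; apply: mulr_ge0; nra].
have h2 : 0 <= (beta * x - 1) * (beta * x * Z) by apply: mulr_ge0; nra.
nra.
Qed.

Section Game.
Variables (R : realFieldType) (n : nat) (E : finType) (a b : E -> R).
Variable Sigma : 'I_n -> {set {set E}}.
Hypotheses (a_ge0 : forall e, 0 <= a e) (b_ge0 : forall e, 0 <= b e).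
Implicit Types (S O f : profile n E) (N : E -> nat).

Lemma scost_load S :
  scost a b S = \sum_e (load S e)%:R * (a e * (load S e)%:R + b e).
Proof. by rewrite /scost /pcost sum_by_load. Qed.

Definition dev_cost O N (i : 'I_n) : R :=
  \sum_(e in O i) (a e * (N e + 1)%:R + b e).

Lemma dev_cost_ge0 O N i : 0 <= dev_cost O N i.
Proof. by apply: sumr_ge0 => e _; rewrite addr_ge0 ?mulr_ge0. Qed.

(* A best response is no worse than deviating to O i, where each load grows
   by at most one. *)
Lemma best_response_le S i s O N :
  best_response a b Sigma S i s -> O i \in Sigma i ->
  (forall e, (load S e <= N e)%N) -> pcost a b (upd S i s) i <= dev_cost O N i.
Proof.
move=> [_ minimal _] OiP loadN; apply: le_trans (minimal _ OiP) _.
rewrite /pcost upd_same; apply: ler_sum => e _.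
rewrite lerD2r ler_wpM2l // ler_nat.
by have := load_upd S i (O i) e; have := loadN e; case: (e \in O i) => /=; lia.
Qed.

Lemma nat_le_sq (x : nat) : (x%:R : R) <= x%:R * x%:R.
Proof. by rewrite -natrM ler_nat; case: x => // x; rewrite leq_pmulr. Qed.

Lemma dev_cost_trivial_le O :
  \sum_(i < n) dev_cost O (fun=> n) i <= (n + 1)%:R * scost a b O.
Proof.
rewrite /dev_cost sum_by_load scost_load mulr_sumr; apply: ler_sum => e _.
have sq : 0 <= (load O e)%:R * (load O e)%:R - (load O e)%:R :> R.
  by rewrite subr_ge0 nat_le_sq.
have := mulr_ge0 (mulr_ge0 (a_ge0 e) (ler0n R n.+1)) sq.
have := mulr_ge0 (ler0n R n) (mulr_ge0 (ler0n R (load O e)) (b_ge0 e)).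
rewrite natrD; have := a_ge0 e; have := b_ge0 e; nra.
Qed.

(* AM-GM: with a parameter nu > 0, the deviation cost is controlled by the
   quadratic quantity sum_e a_e N_e^2 and the cost of O. *)
Lemma dev_cost_amgm_le O N (nu : R) : 0 < nu ->
  2 * nu * \sum_(i < n) dev_cost O N i <=
  \sum_e a e * ((N e) ^ 2)%N%:R + nu ^+ 2 * scost a b O + 2 * nu * scost a b O.
Proof.
move=> nu_gt0; rewrite /dev_cost sum_by_load scost_load !mulr_sumr -!big_split /=.
apply: ler_sum => e _; rewrite natrX natrD.
have sq : 0 <= (load O e)%:R * (load O e)%:R - (load O e)%:R :> R.
  by rewrite subr_ge0 nat_le_sq.
have := mulr_ge0 (a_ge0 e) (sqr_ge0 ((N e)%:R - nu * (load O e)%:R)).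
have := mulr_ge0 (mulr_ge0 (ltW nu_gt0) (a_ge0 e)) sq.
have := mulr_ge0 (sqr_ge0 nu) (mulr_ge0 (ler0n R (load O e)) (b_ge0 e)).
have := ler0n R (load O e); have := a_ge0 e; have := b_ge0 e; nra.
Qed.

Lemma congestion_le_pcost S i :
  \sum_e a e * ((e \in S i) * load S e)%N%:R <= pcost a b S i.
Proof.
rewrite /pcost [X in _ <= X]big_mkcond /=; apply: ler_sum => e _.
case: (e \in S i); rewrite ?mul0n ?mulr0 // mul1n.
by rewrite lerDl.
Qed.

Lemma sq_load_le_scost S :
  \sum_e a e * ((load S e) ^ 2)%N%:R <= scost a b S.
Proof.
rewrite scost_load; apply: ler_sum => e _; rewrite natrX.
have := a_ge0 e; have := b_ge0 e; have := ler0n R (load S e); nra.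
Qed.

Lemma scost_staggered_le f (G : 'I_n -> profile n E) (t : 'I_n -> nat) :
  (forall i l, (t l <= t i)%N -> G i l = f l) ->
  scost a b f <= 2 * \sum_(i < n) pcost a b (G i) i.
Proof.
move=> agree.
have -> : \sum_(i < n) pcost a b (G i) i =
          \sum_(i < n) \sum_(e in f i) (a e * (load (G i) e)%:R + b e).
  by apply: eq_bigr => i _; rewrite /pcost agree.
rewrite /scost /pcost (sum_by_resource f (fun i e => a e * (load f e)%:R + b e)).
rewrite (sum_by_resource f (fun i e => a e * (load (G i) e)%:R + b e)).
rewrite mulr_sumr; apply: ler_sum => e _; rewrite !big_split /= mulrDr.
apply: lerD; last first.
  have : 0 <= \sum_(i < n | e \in f i) b e by apply: sumr_ge0.
  lra.
rewrite -!mulr_sumr -!natr_sum mulrCA ler_wpM2l // -natrM ler_nat.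
exact (load_sq_staggered e agree).
Qed.

Section Segment.
Variables (S : nat -> profile n E) (p : nat -> 'I_n) (t0 T : nat).

Definition br_step (t : nat) : Prop :=
  exists s, best_response a b Sigma (S t) (p t) s /\ S t.+1 = upd (S t) (p t) s.

Hypothesis steps : forall t, (t0 <= t < t0 + T)%N -> br_step t.
Hypothesis covered : forall i, (0 < nmoves p t0 T i)%N.

Lemma frozen_strategy i m d :
  (t0 <= m)%N -> (m + d <= t0 + T)%N ->
  (forall u, (m <= u < m + d)%N -> p u != i) -> S (m + d)%N i = S m i.
Proof.
move=> m_ge; elim: d => [|d IH] m_le idle; first by rewrite addn0.
rewrite addnS; have [s [_ ->]] : br_step (m + d) by apply: steps; lia.
rewrite upd_other; last by rewrite eq_sym idle //; lia.
apply: IH => [|u u_in]; [lia | apply: idle; lia].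
Qed.

Lemma last_move i : exists ti, [/\ (t0 <= ti < t0 + T)%N, p ti = i &
  forall u, (ti < u < t0 + T)%N -> p u != i].
Proof.
have /hasP [t t_in] : has (fun t => true && ((p t == i) != 0%N :> nat))
    (index_iota t0 (t0 + T)) by rewrite -sum_nat_seq_neq0 -lt0n covered.
rewrite /= eqb0 negbK => p_t.
pose P u := (t0 <= u < t0 + T)%N && (p u == i).
have exP : exists u, P u by exists t; rewrite /P -mem_index_iota t_in p_t.
have ubP u : P u -> (u <= t0 + T)%N by move=> /andP [/andP [_ /ltnW]].
case: (ex_maxnP exP ubP) => ti /andP [ti_in /eqP p_ti] ti_max.
exists ti; split => // u u_in; apply/negP => /eqP p_u.
by have := ti_max u; rewrite /P p_u eqxx andbT; lia.
Qed.

Lemma last_moves_agree : exists tf : 'I_n -> nat,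
  (forall i, (t0 <= tf i < t0 + T)%N /\ p (tf i) = i) /\
  (forall i l, (tf l <= tf i)%N -> S (tf i).+1 l = S (t0 + T)%N l).
Proof.
have [tf tfP] := fin_all_exists last_move.
have settled l u : (tf l < u <= t0 + T)%N -> S u l = S (tf l).+1 l.
  have [tf_in _ idle] := tfP l; move=> u_in.
  rewrite -(subnKC (_ : (tf l).+1 <= u)%N); last lia.
  by apply: frozen_strategy => [||v v_in]; [lia | lia | apply: idle; lia].
exists tf; split=> [i | i l tf_le]; first by have [] := tfP i.
have [tf_in _ _] := tfP i.
by rewrite (settled l (t0 + T)%N) ?settled //; lia.
Qed.

Variable O : profile n E.
Hypothesis O_feasible : feasible Sigma O.

Section LoadBound.
Variable N : E -> nat.
Hypothesis loads_le : forall u e, (t0 <= u < t0 + T)%N -> (load (S u) e <= N e)%N.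

Lemma mover_cost_le u :
  (t0 <= u < t0 + T)%N -> pcost a b (S u.+1) (p u) <= dev_cost O N (p u).
Proof.
move=> u_in; have [s [br ->]] := steps u_in.
by apply: best_response_le br (O_feasible _) _ => e; apply: loads_le.
Qed.

(* Charging each player the cost right after its last move: the cost at the
   end of the segment is at most 2 Q. *)
Lemma final_cost_le :
  scost a b (S (t0 + T)%N) <= 2 * \sum_(i < n) dev_cost O N i.
Proof.
have [tf [tf_in agree]] := last_moves_agree.
apply: le_trans (scost_staggered_le agree) _.
rewrite ler_wpM2l //; apply: ler_sum => i _.
by have [ti_in p_ti] := tf_in i; have := mover_cost_le ti_in; rewrite p_ti.
Qed.

Lemma movers_cost_le (beta : R) :
  (forall i, (nmoves p t0 T i)%:R <= beta) ->
  \sum_(t0 <= u < t0 + T) pcost a b (S u.+1) (p u) <=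
  beta * \sum_(i < n) dev_cost O N i.
Proof.
move=> few_moves; apply: le_trans (sum_over_movers (dev_cost_ge0 O N) few_moves).
by apply: ler_sum_nat => u u_in; apply: mover_cost_le.
Qed.

End LoadBound.

Definition peak_load (e : E) : nat := (\max_(k < T) load (S (t0 + k)) e)%N.

Lemma load_le_peak u e : (t0 <= u < t0 + T)%N -> (load (S u) e <= peak_load e)%N.
Proof.
move=> u_in; have k_lt : (u - t0 < T)%N by lia.
have := @leq_bigmax _ (fun k : 'I_T => load (S (t0 + k)) e) (Ordinal k_lt).
by rewrite /= subnKC //; lia.
Qed.

Lemma load_sq_growth e d : (d <= T)%N ->
  (load (S (t0 + d)) e ^ 2 <= load (S t0) e ^ 2 +
    2 * \sum_(t0 <= u < t0 + d) (e \in S u.+1 (p u)) * load (S u.+1) e)%N.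
Proof.
elim: d => [|d IH] d_le; first by rewrite addn0 big_geq // addn0.
rewrite addnS big_nat_recr /=; last lia.
have [s [_ S_next]] : br_step (t0 + d) by apply: steps; lia.
rewrite S_next upd_same.
apply: leq_trans (sq_step (load_upd (S (t0 + d)) (p (t0 + d)) s e)) _.
have := IH (ltnW d_le); lia.
Qed.

Lemma peak_potential_le :
  \sum_e a e * ((peak_load e) ^ 2)%N%:R <=
  scost a b (S t0) + 2 * \sum_(t0 <= u < t0 + T) pcost a b (S u.+1) (p u).
Proof.
have peak_sq e : (peak_load e ^ 2 <= load (S t0) e ^ 2 +
    2 * \sum_(t0 <= u < t0 + T) (e \in S u.+1 (p u)) * load (S u.+1) e)%N.
  set B := (_ + _)%N; rewrite /peak_load.
  apply: (big_ind (fun m => m ^ 2 <= B)%N) => [//|x y le_x le_y|k _].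
    by case/orP: (leq_total x y) => xy; rewrite ?(maxn_idPr xy) ?(maxn_idPl xy).
  apply: leq_trans (load_sq_growth e (ltnW (ltn_ord k))) _.
  rewrite leq_add2l leq_mul2l /= (@big_cat_nat _ _ _ (t0 + k) t0 (t0 + T)) ?leq_addr //=.
  by rewrite leq_add2l ltnW.
apply: (@le_trans _ _ (\sum_e a e * (load (S t0) e ^ 2 + 2 *
  \sum_(t0 <= u < t0 + T) (e \in S u.+1 (p u)) * load (S u.+1) e)%N%:R)).
  by apply: ler_sum => e _; rewrite ler_wpM2l // ler_nat.
rewrite (eq_bigr (fun e => a e * (load (S t0) e ^ 2)%N%:R + 2 *
  \sum_(t0 <= u < t0 + T) a e * ((e \in S u.+1 (p u)) * load (S u.+1) e)%N%:R));
  last by move=> e _; rewrite natrD natrM natr_sum mulrDr mulrCA -mulr_sumr.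
rewrite big_split /= -mulr_sumr exchange_big /=.
apply: lerD; first exact: sq_load_le_scost.
by rewrite ler_wpM2l // ler_sum_nat // => u _; apply: congestion_le_pcost.
Qed.

Lemma first_segment_le :
  scost a b (S (t0 + T)%N) <= 2 * (n + 1)%:R * scost a b O.
Proof.
have loads_le u e : (t0 <= u < t0 + T)%N -> (load (S u) e <= (fun=> n) e)%N.
  by move=> _; apply: load_le_n.
apply: le_trans (final_cost_le loads_le) _.
by rewrite -mulrA ler_wpM2l ?dev_cost_trivial_le.
Qed.

Lemma segment_recursion (beta nu : R) :
  (forall i, (nmoves p t0 T i)%:R <= beta) -> 0 <= beta -> 0 < nu ->
  2 * beta <= nu ->
  nu * scost a b (S (t0 + T)%N) <=
  2 * scost a b (S t0) + 2 * nu ^+ 2 * scost a b O + 4 * nu * scost a b O.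
Proof.
move=> few_moves beta_ge0 nu_gt0 nu_ge.
have loads_le := load_le_peak.
have Q_ge0 : 0 <= \sum_(i < n) dev_cost O peak_load i.
  by apply: sumr_ge0 => i _; apply: dev_cost_ge0.
have final := final_cost_le loads_le.
have movers := movers_cost_le loads_le few_moves.
have potential := peak_potential_le.
have amgm := dev_cost_amgm_le O peak_load nu_gt0.
set Q := \sum_(i < n) _ in Q_ge0 final movers amgm.
(* as 2 beta Q <= nu Q, the last three estimates give nu Q <= C(start) + ... *)
have beta_Q : 2 * beta * Q <= nu * Q by rewrite ler_wpM2r.
have nu_Q : nu * Q <= scost a b (S t0) + nu ^+ 2 * scost a b O +
                      2 * nu * scost a b O by lra.
have := ler_wpM2l (ltW nu_gt0) final; lra.
Qed.

End Segment.

Section Dynamics.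
Variables (beta : R) (S : nat -> profile n E) (p : nat -> 'I_n) (T L : nat).
Variable O : profile n E.
Hypotheses (beta_ge1 : 1 <= beta) (O_feasible : feasible Sigma O).
Hypothesis steps : forall t, (t < L * T)%N -> br_step S p t.
Hypothesis fair : forall j, (j < L)%N -> bounded_covering p beta T j.

Let Z := scost a b O.
Hypothesis Z_ge0 : 0 <= Z.

Lemma covering_steps j : (j < L)%N ->
  forall t, (j * T <= t < j * T + T)%N -> br_step S p t.
Proof.
move=> j_lt t t_in; apply: steps.
have : (j.+1 * T <= L * T)%N by rewrite leq_mul2r j_lt orbT.
by rewrite mulSnr; lia.
Qed.

Lemma covering_moved j : (j < L)%N -> forall i, (0 < nmoves p (j * T) T i)%N.
Proof. by move=> j_lt i; have [] := fair j_lt i. Qed.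

Lemma covering_cost_le k : (k < L)%N ->
  scost a b (S (k.+1 * T)%N) <=
  8 * ((2 ^ iter k next_exponent (up_log 2 n))%N%:R) ^+ 2 * beta * Z.
Proof.
elim: k => [|k IH] k_lt /=.
  rewrite mul1n -[T]add0n.
  apply: le_trans (first_segment_le (covering_steps k_lt) (covering_moved k_lt)
                     O_feasible) _.
  set X : R := (2 ^ up_log 2 n)%N%:R.
  have n_le : 2 * (n + 1)%:R <= 8 * X ^+ 2.
    rewrite -natrX -[8]/(8%:R) -[2]/(2%:R) -!natrM ler_nat.
    have := up_logP n (ltnSn 1); have : (0 < 2 ^ up_log 2 n)%N by rewrite expn_gt0.
    by set y := (2 ^ _)%N; nia.
  apply: le_trans (ler_wpM2r Z_ge0 n_le) _.
  by rewrite -!mulrA; do 3 apply: ler_wpM2l => //; apply: ler_peMl.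
set j := iter k next_exponent _ in IH *; set x : R := (2 ^ j)%N%:R.
have x_ge1 : 1 <= x by rewrite ler1n expn_gt0.
have beta_ge0 : 0 <= beta := le_trans ler01 beta_ge1.
have nu_gt0 : 0 < 2 * beta * x.
  by rewrite !mulr_gt0 // ?(lt_le_trans ltr01 beta_ge1) ?(lt_le_trans ltr01 x_ge1).
have nu_ge : 2 * beta <= 2 * beta * x by rewrite ler_peMr ?mulr_ge0.
have rec := segment_recursion (covering_steps k_lt) (covering_moved k_lt)
  O_feasible (fun i => proj2 (fair k_lt i)) beta_ge0 nu_gt0 nu_ge.
rewrite mulSnr; apply: le_trans (halving_step beta_ge1 Z_ge0 x_ge1 _ rec) _.
  exact: IH (ltnW k_lt).
have := next_exponent_ge j; rewrite -(ler_nat R) natrM [X in _ <= X]natrX -/x => x_le.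
have := ler_wpM2r (mulr_ge0 beta_ge0 Z_ge0) x_le; lra.
Qed.

End Dynamics.

End Game.

Theorem theorem1 :
  exists c : nat, (0 < c)%N /\
  forall (R : realFieldType) (n : nat) (E : finType) (a b : E -> R)
    (Sigma : 'I_n -> {set {set E}}) (beta : R) (T : nat)
    (S : nat -> profile n E) (p : nat -> 'I_n),
    (2 < n)%N ->
    (forall e, 0 <= a e) -> (forall e, 0 <= b e) ->
    (forall S' : profile n E, feasible Sigma S' -> 0 < scost a b S') ->
    1 <= beta -> (n <= T)%N ->
    feasible Sigma (S 0%N) ->
    (forall t, (t < loglog n * T)%N ->
       exists s, best_response a b Sigma (S t) (p t) s /\
                 S t.+1 = upd (S t) (p t) s) ->
    (forall j, (j < loglog n)%N -> bounded_covering p beta T j) ->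
    forall S' : profile n E, feasible Sigma S' ->
      scost a b (S (loglog n * T)%N) <= c%:R * beta * scost a b S'.
Proof.
exists 2048%N; split => //.
move=> R n E a b Sigma beta T S p n_gt2 a_ge0 b_ge0 cost_pos beta_ge1 _ _
  steps fair O O_feasible.
have Z_ge0 := ltW (cost_pos O O_feasible).
have last_lt : ((loglog n).-1 < loglog n)%N by rewrite prednK ?loglog_gt0.
have := covering_cost_le a_ge0 b_ge0 beta_ge1 O_feasible steps fair Z_ge0 last_lt.
rewrite prednK ?loglog_gt0 // => cost_le; apply: le_trans cost_le _.
have beta_ge0 : 0 <= beta := le_trans ler01 beta_ge1.
do 2 apply: ler_wpM2r => //.
rewrite -natrX -[8]/(8%:R) -natrM ler_nat.
have pow_le : (2 ^ iter (loglog n).-1 next_exponent (up_log 2 n) <= 2 ^ 4)%N.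
  by rewrite leq_exp2l // loglog_exponent_le.
(* 8 * (2 ^ 4) ^ 2 = 2048 *)
by rewrite -mulnn; apply: leq_mul (leqnn 8) (leq_mul pow_le pow_le).
Qed.
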